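(* Let $s$ and $d$ be positive integers with $s\leqslant d/2$ and $d$ even. Then $$ n(d-s,d)\geqslant \sum_{i=0}^{\frac d2 -s}\binom{d-s}{i}+\sum_{k=1}^{s-1}2^k\binom{d-s}{\frac d2-s+k}+2^s\sum_{i=\frac d2}^{d-s}\binom{d-s}{i}. $$
   Context: A box in $\mathbb{R}^d$ is an axis-parallel $d$-dimensional cuboid. For a positive integer $k\leqslant d$, two boxes in $\mathbb{R}^d$ are called $k$-neighborly if their intersection is a box of dimension at least $d-k$ and at most $d-1$. $n(k,d)$ denotes the maximum size of a family of pairwise $k$-neighborly boxes in $\mathbb{R}^d$. Equivalently, $n(k,d)$ is the maximum number of strings in $\{0,1,*\}^d$ such that any two distinct ones $u,v$ satisfy $1\leqslant \mathrm{dist}(u,v)\leqslant k$, where $\mathrm{dist}(u,v)$ is the number of positions $i$ with $u_i\neq v_i$ and $u_i,v_i\in\{0,1\}$. *)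

From mathcomp Require Import all_boot.
Set Implicit Arguments. Unset Strict Implicit. Unset Printing Implicit Defensive.

(* A string in {0,1,*}^d : each coordinate is Some false (0), Some true (1) or None ( * ). *)
Definition word (d : nat) := {ffun 'I_d -> option bool}.

Definition dist (d : nat) (u v : word d) : nat :=
  #|[set i : 'I_d | match u i, v i with
                    | Some a, Some b => a != b
                    | _, _ => false end]|.

Definition neighborly (k d : nat) (F : {set word d}) : bool :=
  [forall u in F, forall v in F, (u != v) ==> (1 <= dist u v <= k)].

Definition n (k d : nat) : nat :=
  \max_(F : {set word d} | neighborly k F) #|F|.

From mathcomp Require Import all_boot zify.
Set Implicit Arguments. Unset Strict Implicit. Unset Printing Implicit Defensive.

(* Write d = 2(s + t) and N = d - s = s + 2t.  A word of the family is an
   arbitrary 0/1 word A on the first N coordinates followed, on the last s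
   coordinates, by a 0/1 pattern on a set S(A) of size min(s, |A| - t) and
   stars elsewhere; counting by |A| gives the bound.  Two such words are at
   distance at most N as soon as ham(A, B) + |S(A) ∩ S(B)| <= N.  To ensure
   this, rank the first s coordinates of A as follows: the coordinates j with
   A_j = 1 get ranks j, those with A_j = 0 get ranks 2s - 1 - j, and S(A) is
   an initial segment of ranks.  If the two initial segments are short, a
   coordinate in S(A) ∩ S(B) cannot carry different bits in A and B, so it
   is an agreement of A and B; if they are long, S(A) ∪ S(B) covers every
   coordinate j < s of A ∪ B, and inclusion-exclusion together with
   |S(A)| <= |A| - t finishes. *)

Lemma distxx d (u : word d) : dist u u = 0.
Proof.
apply/eqP; rewrite cards_eq0; apply/eqP/setP => i; rewrite !inE.
by case: (u i) => // -[].
Qed.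

Lemma card_le_n k d (T : finType) (D : {set T}) (f : T -> word d) :
  {in D &, forall p q, p != q -> 0 < dist (f p) (f q) <= k} -> #|D| <= n k d.
Proof.
move=> distD.
have f_inj : {in D &, injective f}.
  move=> p q pD qD fpq; apply/eqP; apply: contraT => /(distD _ _ pD qD).
  by rewrite fpq distxx.
have : neighborly k (f @: D).
  apply/forall_inP => _ /imsetP [p pD ->]; apply/forall_inP => _ /imsetP [q qD ->].
  apply/implyP => fpq; apply: distD => //.
  by apply: contraNneq fpq => ->.
by rewrite -(card_in_imset f_inj); apply: leq_bigmax_cond.
Qed.

Lemma split_lshift a b (j : 'I_a) : split (lshift b j) = inl j.
Proof. exact: (unsplitK (inl _ j)). Qed.

Lemma split_rshift a b (j : 'I_b) : split (rshift a j) = inr j.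
Proof. exact: (unsplitK (inr _ j)). Qed.

Lemma card_split_ord a b (P : pred 'I_(a + b)) :
  #|[set i | P i]| =
  #|[set j : 'I_a | P (lshift b j)]| + #|[set j : 'I_b | P (rshift a j)]|.
Proof.
by rewrite -!sum1_card big_split_ord; congr (_ + _); apply: eq_bigl => j; rewrite !inE.
Qed.

Lemma card_split_set a b (X : {set 'I_(a + b)}) :
  #|X| = #|[set j : 'I_a | lshift b j \in X]| + #|[set j : 'I_b | rshift a j \in X]|.
Proof. by rewrite -(card_split_ord (mem X)); apply: eq_card => i; rewrite inE. Qed.

Lemma card_sigma_set (T1 T2 : finType) (P : T1 -> T2 -> bool) :
  #|[set p : T1 * T2 | P p.1 p.2]| = \sum_(a : T1) #|[set b | P a b]|.
Proof.
rewrite -sum1_card big_mkcond /=.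
transitivity (\sum_(a : T1) \sum_(b : T2) (P a b : nat)).
  by rewrite pair_big /=; apply: eq_bigr => p _; rewrite inE.
apply: eq_bigr => a _; rewrite -sum1_card [RHS]big_mkcond /=.
by apply: eq_bigr => b _; rewrite inE.
Qed.

Lemma sum_card_subsets (T : finType) (F : nat -> nat) :
  \sum_(A : {set T}) F #|A| = \sum_(i < #|T|.+1) 'C(#|T|, i) * F i.
Proof.
rewrite (partition_big (fun A : {set T} => inord #|A| : 'I_#|T|.+1) xpredT) //=.
apply: eq_bigr => i _.
rewrite (_ : 'C(#|T|, i) = #|[set A : {set T} | #|A| == i]|); last by rewrite card_draws.
rewrite -(sum1_card (mem [set A : {set T} | #|A| == i])) big_distrl /=.
rewrite [RHS]big_mkcond [LHS]big_mkcond /=; apply: eq_bigr => A _; rewrite inE.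
have A_lt : #|A| < #|T|.+1 by rewrite ltnS max_card.
have -> : (inord #|A| == i) = (#|A| == i).
  by apply/eqP/eqP => [<- | h]; [rewrite inordK | apply: val_inj; rewrite /= inordK].
by case: eqP => [-> | _]; rewrite ?mul1n.
Qed.

Lemma nat_ivt (f : nat -> nat) m k :
  (forall q, f q.+1 <= (f q).+1) -> f 0 <= k <= f m -> exists2 q, q <= m & f q = k.
Proof.
move=> f_step; elim: m => [|m IHm] /andP [f0_k k_fm].
  by exists 0 => //; apply/eqP; rewrite eqn_leq f0_k k_fm.
have [k_le | fm_lt] := leqP k (f m).
  by have [q qm fq] := IHm (introT andP (conj f0_k k_le)); exists q; rewrite ?leqW.
by exists m.+1 => //; apply/eqP; rewrite eqn_leq k_fm andbT (leq_trans (f_step m)).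
Qed.

Section Threshold.
Variables (I : finType) (r : I -> nat).
Hypothesis r_inj : injective r.

Lemma card_rank_ltS q : #|[set i | r i < q.+1]| <= #|[set i | r i < q]|.+1.
Proof.
have sub : [set i | r i < q.+1] \subset [set i | r i < q] :|: [set i | r i == q].
  by apply/subsetP => i; rewrite !inE ltnS leq_eqVlt orbC.
apply: leq_trans (subset_leq_card sub) (leq_trans (leq_card_setU _ _) _).
rewrite -addn1 leq_add2l; apply/card_le1_eqP => i j; rewrite !inE => /eqP ri /eqP rj.
by apply: r_inj; rewrite ri rj.
Qed.

Lemma exists_threshold k : k <= #|I| -> exists q, #|[set i | r i < q]| == k.
Proof.
move=> k_le; have [|q _ rq] := @nat_ivt _ (\max_i (r i).+1) k card_rank_ltS;
  last by exists q; rewrite rq.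
have -> : [set i | r i < 0] = set0 by apply/setP => i; rewrite !inE.
have -> : [set i | r i < \max_j (r j).+1] = setT.
  by apply/setP => i; rewrite !inE; exact: leq_bigmax.
by rewrite cards0 cardsT.
Qed.

Definition threshold k (k_le : k <= #|I|) := xchoose (exists_threshold k_le).

Lemma card_threshold k (k_le : k <= #|I|) : #|[set i | r i < threshold k_le]| = k.
Proof. exact/eqP/(xchooseP (exists_threshold k_le)). Qed.

End Threshold.

Definition hamming (T : finType) (A B : {set T}) := #|[set a | (a \in A) != (a \in B)]|.

Lemma hamming_add_agree (T : finType) (A B : {set T}) :
  hamming A B + #|[set a | (a \in A) == (a \in B)]| = #|T|.
Proof.
rewrite /hamming -(cardsC [set a | (a \in A) != (a \in B)]); congr (_ + _).
by apply: eq_card => a; rewrite !inE negbK.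
Qed.

Lemma hamming_add_setI (T : finType) (A B : {set T}) :
  hamming A B + #|A :&: B| = #|A :|: B|.
Proof.
rewrite /hamming -(cardsID (A :&: B) (A :|: B)) addnC.
by congr (_ + _); apply: eq_card => a; rewrite !inE; case: (a \in A); case: (a \in B).
Qed.

Section Construction.
Variables s t : nat.
Local Notation N := (s + (t + t)).
Implicit Types (A B : {set 'I_N}) (j : 'I_s).

Definition prefix_bit A j := lshift (t + t) j \in A.

Definition rank A j := if prefix_bit A j then val j else (s + s).-1 - j.

Lemma rank_inj A : injective (rank A).
Proof.
move=> i j; have := ltn_ord i; have := ltn_ord j.
rewrite /rank; case: (prefix_bit A i); case: (prefix_bit A j) => /= *;
  by apply: val_inj => /=; lia.
Qed.

Definition active_size A := minn s (#|A| - t).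

Lemma active_size_le A : active_size A <= #|'I_s|.
Proof. by rewrite card_ord geq_minl. Qed.

Definition active_bound A := threshold (@rank_inj A) (active_size_le A).

Definition active A := [set j | rank A j < active_bound A].

Lemma card_active A : #|active A| = active_size A.
Proof. exact: card_threshold. Qed.

Lemma active_agree A B : active_bound A + active_bound B <= s + s ->
  active A :&: active B \subset [set j | prefix_bit A j == prefix_bit B j].
Proof.
move=> short; apply/subsetP => j; rewrite !inE /rank; have := ltn_ord j.
by case: (prefix_bit A j); case: (prefix_bit B j) => //= ? /andP [? ?]; lia.
Qed.

Lemma prefix_setU_active A B : s + s < active_bound A + active_bound B ->
  [set j | lshift (t + t) j \in A :|: B] \subset active A :|: active B.
Proof.
move=> long; apply/subsetP => j; rewrite !inE -!/(prefix_bit _ j) /rank.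
have := ltn_ord j; case: (prefix_bit A j); case: (prefix_bit B j) => //= ? _;
by apply/negPn/negP; rewrite negb_or -!leqNgt => /andP [? ?]; lia.
Qed.

Lemma hamming_add_active A B : hamming A B + #|active A :&: active B| <= N.
Proof.
have ham_le : hamming A B <= N by rewrite -[X in _ <= X]card_ord max_card.
(* [#|A| - t] truncates: [active_size A + t <= #|A|] only holds when [active_size A > 0]. *)
have [kA0 | kA_gt0] := posnP (active_size A).
  move/eqP: kA0; rewrite -card_active cards_eq0 => /eqP ->.
  by rewrite set0I cards0 addn0.
have [kB0 | kB_gt0] := posnP (active_size B).
  move/eqP: kB0; rewrite -card_active cards_eq0 => /eqP ->.
  by rewrite setI0 cards0 addn0.
case: (leqP (active_bound A + active_bound B) (s + s)) => [short | long].
  rewrite -[X in _ <= X]card_ord -(hamming_add_agree A B) leq_add2l.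
  rewrite (card_split_ord (fun a => (a \in A) == (a \in B))).
  exact: leq_trans (subset_leq_card (active_agree short)) (leq_addr _ _).
pose prefix := [set j : 'I_s | lshift (t + t) j \in A :|: B].
have prefix_le : #|prefix| + #|active A :&: active B| <= active_size A + active_size B.
  by rewrite -!card_active -(cardsUI (active A)) leq_add2r subset_leq_card ?prefix_setU_active.
have setU_le : #|A :|: B| <= #|prefix| + (t + t).
  by rewrite [in X in X <= _]card_split_set leq_add2l -[X in _ <= X]card_ord max_card.
have setU_N : #|A :|: B| <= N by rewrite -[X in _ <= X]card_ord max_card.
have := hamming_add_setI A B; have := cardsUI A B.
by rewrite /active_size in kA_gt0 kB_gt0 prefix_le; lia.
Qed.

Definition word_of (p : {set 'I_N} * {set 'I_s}) : word (N + s) :=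
  [ffun i => match split i with
             | inl a => Some (a \in p.1)
             | inr j => if j \in active p.1 then Some (j \in p.2) else None
             end].

Definition family := [set p : {set 'I_N} * {set 'I_s} | p.2 \subset active p.1].

Lemma dist_word_of p q : dist (word_of p) (word_of q) =
  hamming p.1 q.1 +
  #|[set j | [&& j \in active p.1, j \in active q.1 & (j \in p.2) != (j \in q.2)]]|.
Proof.
rewrite /dist card_split_ord /hamming.
congr (_ + _); apply: eq_card => i; rewrite !inE !ffunE ?split_lshift ?split_rshift //.
by rewrite !inE; case: (rank p.1 i < _); case: (rank q.1 i < _).
Qed.

Lemma dist_word_of_le p q : dist (word_of p) (word_of q) <= N.
Proof.
rewrite dist_word_of; apply: leq_trans (hamming_add_active p.1 q.1); rewrite leq_add2l.
by apply/subset_leq_card/subsetP => j; rewrite !inE => /and3P [-> -> _].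
Qed.

Lemma dist_word_of_gt0 p q : p \in family -> q \in family -> p != q ->
  0 < dist (word_of p) (word_of q).
Proof.
case: p q => [A Y] [B Z]; rewrite !inE /= => YA ZB; apply: contraNT.
rewrite dist_word_of /= -leqNgt leqn0 addn_eq0 !cards_eq0 => /andP [/eqP hAB /eqP hYZ].
have eAB : A = B.
  apply/setP => a; apply/eqP; apply: contraT => hne.
  by have := in_set0 a; rewrite -hAB inE hne.
subst B; apply/eqP; congr (_, _); apply/setP => j; apply/eqP; apply: contraT => hne.
have : (j \in Y) || (j \in Z) by move: hne; case: (j \in Y); case: (j \in Z).
case/orP => [/(subsetP YA) | /(subsetP ZB)] jA;
  by have := in_set0 j; rewrite -hYZ in_set jA hne.
Qed.

Lemma card_family : #|family| = \sum_(i < N.+1) 'C(N, i) * 2 ^ minn s (i - t).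
Proof.
rewrite (card_sigma_set (fun (A : {set 'I_N}) (Y : {set 'I_s}) => Y \subset active A)).
rewrite -[in RHS](card_ord N) -(sum_card_subsets _ (fun i => 2 ^ minn s (i - t))).
apply: eq_bigr => A _ /=; rewrite -[minn _ _]/(active_size A) -card_active -card_powerset.
by apply: eq_card => Y; rewrite !inE.
Qed.

Lemma card_family_le_n : #|family| <= n N (N + s).
Proof.
apply: (card_le_n (f := word_of)) => p q pF qF pq.
by rewrite dist_word_of_gt0 ?dist_word_of_le.
Qed.

End Construction.

Lemma sum_binomial_split s t : 0 < s ->
  \sum_(0 <= i < t.+1) 'C(s + (t + t), i)
  + \sum_(1 <= k < s) 2 ^ k * 'C(s + (t + t), t + k)
  + 2 ^ s * \sum_(s + t <= i < (s + (t + t)).+1) 'C(s + (t + t), i)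
  = \sum_(i < (s + (t + t)).+1) 'C(s + (t + t), i) * 2 ^ (minn s (i - t)).
Proof.
move=> s_gt0; rewrite -(big_mkord xpredT (fun i => 'C(_, i) * 2 ^ minn s (i - t))).
rewrite [RHS](big_cat_nat (n := t.+1)) /=; [|by []|lia].
rewrite [X in _ = _ + X](big_cat_nat (m := t.+1) (n := s + t)) /=; [|lia|lia].
rewrite -addnA; congr (_ + _); [|congr (_ + _)].
- by apply: eq_big_nat => i /andP [_ ?]; rewrite (_ : i - t = 0) ?minn0 ?muln1 //; lia.
- rewrite -[t.+1]add1n big_addn addnK; apply: eq_big_nat => k /andP [? ?].
  by rewrite addnK (_ : minn s k = k) 1?(addnC k) 1?mulnC //; lia.
- rewrite big_distrr /=; apply: eq_big_nat => i /andP [? ?].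
  by rewrite (_ : minn s (i - t) = s) 1?mulnC //; lia.
Qed.

Theorem theorem1 (s d : nat) :
  0 < s -> 0 < d -> ~~ odd d -> s <= d./2 ->
  \sum_(0 <= i < (d./2 - s).+1) 'C(d - s, i)
  + \sum_(1 <= k < s) 2 ^ k * 'C(d - s, d./2 - s + k)
  + 2 ^ s * \sum_(d./2 <= i < (d - s).+1) 'C(d - s, i)
  <= n (d - s) d.
Proof.
move=> s_gt0 _ d_even s_le.
have d_double : d = d./2 + d./2.
  by have := odd_double_half d; rewrite (negbTE d_even) add0n -addnn.
set t := d./2 - s.
have -> : d - s = s + (t + t) by rewrite /t; lia.
have -> : d./2 = s + t by rewrite /t; lia.
have -> : d = s + (t + t) + s by rewrite /t; lia.
by rewrite sum_binomial_split // -card_family card_family_le_n.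
Qed.
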